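(* Let $m,n\geq 3$ and let $v$ be a vertex of the torus grid $T_{m,n}=C_m\square C_n$. Then $\mathrm{ef}(v)<9$.
   Context: For a vertex $v$ of a graph, $N_i(v)$ denotes the set of vertices at distance exactly $i$ from $v$, and $\mathrm{ef}(v)=\sum_{i\geq 0}(1/2)^i|N_i(v)|$. $C_m\square C_n$ is the Cartesian product of cycles on $m$ and $n$ vertices. *)

From mathcomp Require Import all_boot all_order all_algebra.
Set Implicit Arguments. Unset Strict Implicit. Unset Printing Implicit Defensive.
Import Order.TTheory GRing.Theory Num.Theory.

Definition cyc_adj (m : nat) (a b : 'I_m) : bool :=
  (val b == (val a).+1 %% m) || (val a == (val b).+1 %% m).

Definition torus_adj (m n : nat) (x y : 'I_m * 'I_n) : bool :=
  ((x.1 == y.1) && cyc_adj x.2 y.2) || ((x.2 == y.2) && cyc_adj x.1 y.1).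

Section Balls.
Variables (T : finType) (adj : rel T) (v : T).

Fixpoint ball (k : nat) : {set T} :=
  match k with
  | 0 => [set v]
  | k'.+1 => ball k' :|: [set w | [exists u in ball k', adj u w]]
  end.

Definition sphere (i : nat) : {set T} :=
  ball i :\: (if i is i'.+1 then ball i' else set0).

(* ef(v) = sum_{i>=0} (1/2)^i |N_i(v)|.  Every vertex at finite distance i
   satisfies i < #|T|, so N_i(v) is empty for i >= #|T| and the sum is finite. *)
Definition ef : rat := \sum_(i < #|T|) (2%:R^-1) ^+ i * (#|sphere i|)%:R.
End Balls.

(** Write [|x|] for the circular distance from [0] to [x] in [C_N]. The map
    [w |-> |w.1 - v.1| + |w.2 - v.2|] vanishes at [v] and grows by at most one
    along each edge of the torus, so it bounds the graph distance from [v] from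
    below; hence [ef(v)] is at most [sum_w (1/2)^(|w.1 - v.1| + |w.2 - v.2|)],
    which factors as a product of two cycle sums. Bounding
    [(1/2)^min(x, N - x)] by [(1/2)^x + (1/2)^(N - x)] shows that a cycle sum is
    below [2 + 1 = 3], so the product is below [9]. *)

From mathcomp Require Import all_boot all_order all_algebra.
From mathcomp Require Import lra zify.
Set Implicit Arguments. Unset Strict Implicit. Unset Printing Implicit Defensive.
Import Order.TTheory GRing.Theory Num.Theory.
Local Open Scope ring_scope.

Section Balls.
Variables (T : finType) (adj : rel T) (v : T).

Lemma subset_ball k l : (k <= l)%N -> ball adj v k \subset ball adj v l.
Proof.
elim: l => [|l IHl]; first by rewrite leqn0 => /eqP ->.
rewrite leq_eqVlt => /orP [/eqP -> | /ltnSE lt_kl]; first exact: subxx.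
exact: subset_trans (IHl lt_kl) (subsetUl _ _).
Qed.

Lemma sphere_sub_ball i : sphere adj v i \subset ball adj v i.
Proof. exact: subsetDl. Qed.

Lemma disjoint_sphere i j : i != j -> [disjoint sphere adj v i & sphere adj v j].
Proof.
suff disjoint_lt k l : (k < l)%N -> [disjoint sphere adj v k & sphere adj v l].
  by rewrite neq_ltn => /orP [/disjoint_lt // | /disjoint_lt]; rewrite disjoint_sym.
case: l => // l /ltnSE le_kl.
rewrite -setI_eq0; apply/eqP/setP => x; rewrite !inE.
apply/negbTE/negP => /andP [/andP [_ x_k]] /andP [x_notl _].
by rewrite (subsetP (subset_ball le_kl) _ x_k) in x_notl.
Qed.

Variable f : T -> nat.
Hypothesis f_v : f v = 0%N.
Hypothesis f_adj : forall u w, adj u w -> (f w <= f u + 1)%N.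

Lemma ball_potential_le k w : w \in ball adj v k -> (f w <= k)%N.
Proof.
elim: k w => [|k IHk] w /=; first by rewrite inE => /eqP ->; rewrite f_v.
rewrite !inE => /orP [/IHk/leqW // | /existsP [u /andP [u_k adj_uw]]].
by have := f_adj adj_uw; have := IHk u u_k; lia.
Qed.

Lemma ef_le_potential : ef adj v <= \sum_w 2^-1 ^+ f w.
Proof.
have sphere_le i :
    (2^-1 : rat) ^+ i * #|sphere adj v i|%:R <= \sum_(w in sphere adj v i) 2^-1 ^+ f w.
  rewrite mulr_natr -sumr_const; apply: ler_sum => w w_i.
  apply: ler_wiXn2l => //; apply: ball_potential_le.
  exact: subsetP (sphere_sub_ball i) _ w_i.
apply: le_trans (ler_sum _ (fun (i : 'I_#|T|) _ => sphere_le i)) _.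
rewrite -(partition_disjoint_bigcup _ (fun w => 2^-1 ^+ f w)); last first.
  by move=> i j neq_ij; apply: disjoint_sphere.
rewrite [leRHS](bigID (mem (\bigcup_(i < #|T|) sphere adj v i))) /= lerDl.
by apply: sumr_ge0 => w _; apply: exprn_ge0.
Qed.

End Balls.

Lemma sum_halfX (R : realFieldType) k : \sum_(i < k) (2^-1 : R) ^+ i = 2 - 2 * 2^-1 ^+ k.
Proof. by have := subrX1 (2^-1 : R) k; lra. Qed.

Definition cyc_norm p (x : 'I_p.+1) : nat := minn x (p.+1 - x).

Lemma val_addZp1 p (x : 'I_p.+1) : val (x + Zp1) = ((x + 1) %% p.+1)%N.
Proof. exact: modnDmr. Qed.

Lemma cyc_norm_addZp1 p (x : 'I_p.+1) :
  (cyc_norm (x + Zp1)%R <= cyc_norm x + 1)%N /\ (cyc_norm x <= cyc_norm (x + Zp1)%R + 1)%N.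
Proof.
rewrite /cyc_norm val_addZp1; have := ltn_ord x.
case: (ltnP (x + 1) p.+1) => [lt_x1 | le_x1] lt_x; first by rewrite modn_small //; lia.
by rewrite (_ : (x + 1 = p.+1)%N) ?modnn; lia.
Qed.

Lemma cyc_norm_adj p (a b c : 'I_p.+1) :
  cyc_adj a b -> (cyc_norm (b - c)%R <= cyc_norm (a - c)%R + 1)%N.
Proof.
case/orP => /eqP succ_ab.
- have -> : b = a + Zp1 by apply: val_inj; rewrite val_addZp1 succ_ab addn1.
  by rewrite addrAC; case: (cyc_norm_addZp1 (a - c)%R).
- have -> : a = b + Zp1 by apply: val_inj; rewrite val_addZp1 succ_ab addn1.
  by rewrite addrAC; case: (cyc_norm_addZp1 (b - c)%R).
Qed.

Lemma sum_cyc_norm_lt3 (R : realFieldType) p (c : 'I_p.+1) :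
  \sum_(a : 'I_p.+1) (2^-1 : R) ^+ cyc_norm (a - c) < 3%:R.
Proof.
have half_gt0 : 0 < (2^-1 : R) by rewrite invr_gt0 ltr0n.
rewrite (reindex_inj (addIr c)) /=; under eq_bigr do rewrite addrK.
have norm_le (x : 'I_p.+1) : (2^-1 : R) ^+ cyc_norm x <= 2^-1 ^+ x + 2^-1 ^+ (p.+1 - x).
  by rewrite /cyc_norm; case: leqP => _; rewrite ?lerDl ?lerDr exprn_ge0 ?ltW.
apply: le_lt_trans (ler_sum _ (fun x _ => norm_le x)) _.
rewrite big_split /= [X in _ + X](reindex_inj rev_ord_inj) /=.
under [X in _ + X]eq_bigr => i _ do rewrite subKn // exprS.
rewrite -mulr_sumr !sum_halfX.
by have := exprn_gt0 p.+1 half_gt0; lra.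
Qed.

Definition torus_dist p q (v w : 'I_p.+1 * 'I_q.+1) : nat :=
  cyc_norm (w.1 - v.1)%R + cyc_norm (w.2 - v.2)%R.

Lemma torus_dist_adj p q (v u w : 'I_p.+1 * 'I_q.+1) :
  torus_adj u w -> (torus_dist v w <= torus_dist v u + 1)%N.
Proof.
case: u w => [a1 a2] [b1 b2]; rewrite /torus_adj /torus_dist /=.
case/orP => /andP [/eqP <- adj_ab].
- by have := cyc_norm_adj v.2 adj_ab; lia.
- by have := cyc_norm_adj v.1 adj_ab; lia.
Qed.

Lemma sum_torus_dist (R : comPzSemiRingType) p q (v : 'I_p.+1 * 'I_q.+1) (x : R) :
  \sum_w x ^+ torus_dist v w =
  (\sum_a x ^+ cyc_norm (a - v.1)%R) * (\sum_b x ^+ cyc_norm (b - v.2)%R).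
Proof. by rewrite big_distrlr pair_big; apply: eq_bigr => -[a b] _; rewrite exprD. Qed.

(* [hm] and [hn] are used only to exclude the empty torus: the bound holds for all [m, n >= 1]. *)
Theorem claim5p5 (m n : nat) (hm : (3 <= m)%N) (hn : (3 <= n)%N)
  (v : 'I_m * 'I_n) :
  ef (@torus_adj m n) v < 9%:R.
Proof.
case: m hm v => [|p] // _; case: n hn => [|q] // _ v.
apply: le_lt_trans (ef_le_potential (f := torus_dist v) _ _) _.
- by rewrite /torus_dist !subrr.
- exact: torus_dist_adj.
rewrite sum_torus_dist (natrM _ 3 3).
by apply: ltr_pM; rewrite ?sum_cyc_norm_lt3 //; apply: sumr_ge0 => i _; apply: exprn_ge0.
Qed.
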